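(* Under Algorithm 2(a) below, for every slot $t$, the rows of $H(t)$ are linearly independent, where $H(t)$ is the matrix whose rows are the global coefficient vectors (in $\mathbb{F}_q^{A(t)}$, with respect to the original packet stream, $A(t)$ being the number of arrivals up to and including slot $t$) of the sender's queue contents at the end of Step 3 of slot $t$.
   Context: Setting: a sender broadcasts to $n$ receivers over a slotted packet erasure broadcast channel with perfect feedback; packets are vectors over $\mathbb{F}_q$, indexed by arrival order. Algorithm 2(a) ($q>n$): The sender stores queue contents $\mathbf{y}_1,\dots,\mathbf{y}_Q$ (linear combinations of original packets) and matrices $B,B_1,\dots,B_n$ with $Q$ columns whose rows are local coefficient vectors with respect to the current queue; initially all empty. Each slot: (Step 3) append the $a$ arriving packets to the queue, set $B=I_Q$ for the new $Q$, append $a$ zero columns to each $B_j$. (Step 4) If the queue is nonempty, choose $\mathbf{g}\in\mathrm{span}(B)$ with $\mathbf{g}\notin\mathrm{span}(B_j)$ for all $j$ with $\mathrm{span}(B_j)\ne\mathrm{span}(B)$ (row spaces), and transmit $\sum_ig_i\mathbf{y}_i$; else $\mathbf{g}=\mathbf{0}$. (Step 5) If $\mathbf{g}\ne\mathbf{0}$ and receiver $j$ received it, append $\mathbf{g}$ as a row of $B_j$. (Step 6) Let $B_\Delta$ be a basis of $\bigcap_j\mathrm{span}(B_j)$, $B'$ a completion of $B_\Delta$ into a basis of $\mathrm{span}(B)$, $B''=B'\setminus B_\Delta$, and $B_j'$ a completion of $B_\Delta$ into a basis of $\mathrm{span}(B_j)$ with $B_j'':=B_j'\setminus B_\Delta\subseteq\mathrm{span}(B'')$.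 (Step 7) Replace the queue contents by the packets $\sum_ih_i\mathbf{y}_i$ for $\mathbf{h}\in B''$. (Step 8) Replace $B_j$ by $X_j$ where $B_j''=X_jB''$; set $B=I_{|B''|}$. *)

From HB Require Import structures.
From mathcomp Require Import all_boot all_algebra.
Unset Printing Implicit Defensive.
Import GRing.Theory.
Local Open Scope ring_scope.

(* Sender state at the end of a slot (after Step 8).
   sA   : number of original packets arrived so far, A(t)
   sQ   : queue length Q
   sH   : global coefficient vectors of the queue contents y_1..y_Q
          (row i = coefficients of y_i w.r.t. the original packets 1..A)
   sr j : number of rows of B_j
   sB j : the matrix B_j (local coefficient vectors w.r.t. the queue).
   B itself is always I_Q at this point and is not stored. *)
Record state (F : fieldType) (n : nat) := State {
  sA : nat;
  sQ : nat;
  sH : 'M[F]_(sQ, sA);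
  sr : 'I_n -> nat;
  sB : forall j : 'I_n, 'M[F]_(sr j, sQ)
}.

Arguments sA {F n}.
Arguments sQ {F n}.
Arguments sH {F n}.
Arguments sr {F n}.
Arguments sB {F n}.
Arguments State {F n}.

Definition init_state (F : fieldType) (n : nat) : state F n :=
  State 0 0 0 (fun _ => 0%N) (fun _ => 0).

(* Step 3: global coefficient matrix of the queue after appending the a
   arriving packets (old rows padded with zeros, new packets = unit vectors). *)
Definition H3 (F : fieldType) (n : nat) (s : state F n) (a : nat)
  : 'M[F]_(sQ s + a, sA s + a) :=
  block_mx (sH s) 0 0 1%:M.

Definition B3 (F : fieldType) (n : nat) (s : state F n) (a : nat) (j : 'I_n)
  : 'M[F]_(sr s j, sQ s + a) :=
  row_mx (sB s j) 0.

(* Step 5: append g as a row of B_j iff g <> 0 and receiver j received it. *)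
Definition B5 (F : fieldType) (n : nat) (s : state F n) (a : nat)
  (g : 'rV[F]_(sQ s + a)) (rcv : 'I_n -> bool) (j : 'I_n)
  : 'M[F]_(sr s j + ((g != 0) && rcv j), sQ s + a) :=
  col_mx (@B3 F n s a j) (\matrix_(i < ((g != 0) && rcv j : nat), k < sQ s + a) g 0 k).

(* One slot of Algorithm 2(a) (Steps 3-8), as a relation between the state
   at the end of the previous slot and the state at the end of this slot,
   given the number a of arrivals in this slot and the reception pattern
   rcv (rcv j = receiver j received the transmission).  All choices made by
   the algorithm (g, bases and completions) are existentially quantified. *)
Definition alg2a_step (F : fieldType) (n : nat) (a : nat) (rcv : 'I_n -> bool)
  (s s' : state F n) : Prop :=
  let Q' := (sQ s + a)%N in
  let B : 'M[F]_Q' := 1%:M in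
  exists g : 'rV[F]_Q',
    ((0 < Q')%N ->
       (g <= B)%MS /\
       forall j : 'I_n, ~~ (@B3 F n s a j == B)%MS -> ~~ (g <= @B3 F n s a j)%MS) /\
    (Q' = 0%N -> g = 0) /\
    exists (d k : nat) (BD : 'M[F]_(d, Q')) (B2 : 'M[F]_(k, Q'))
           (kj : 'I_n -> nat) (Bj2 : forall j : 'I_n, 'M[F]_(kj j, Q'))
           (X : forall j : 'I_n, 'M[F]_(kj j, k)),
      row_free BD /\ (BD == \bigcap_(j : 'I_n) <<@B5 F n s a g rcv j>>)%MS /\
      row_free (col_mx BD B2) /\ (col_mx BD B2 == B)%MS /\
      (forall j : 'I_n,
         row_free (col_mx BD (Bj2 j)) /\
         (col_mx BD (Bj2 j) == @B5 F n s a g rcv j)%MS /\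
         (Bj2 j <= B2)%MS) /\
      (forall j : 'I_n, Bj2 j = X j *m B2) /\
      (* Step 7 (new queue contents = B'' applied to the queue) and Step 8 *)
      s' = State (sA s + a) k (B2 *m @H3 F n s a) kj X.

Arguments H3 {F n}.
Arguments B3 {F n}.
Arguments B5 {F n}.
Arguments alg2a_step {F n}.
Arguments init_state : clear implicits.

From HB Require Import structures.
From mathcomp Require Import all_boot all_algebra.
Import GRing.Theory.
Local Open Scope ring_scope.

(* The global coefficients stay linearly independent because every slot only
   multiplies them by full-row-rank matrices: Step 3 appends the unit vectors
   of the new packets, which is block-diagonal with [sH] and the identity, and
   Step 7 multiplies by B'', which is row-free as part of the basis B' of the
   whole local coefficient space. *)

Lemma row_free_diag_block_mx (F : fieldType) m1 m2 n1 n2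
    (A : 'M[F]_(m1, n1)) (B : 'M[F]_(m2, n2)) :
  row_free A -> row_free B -> row_free (block_mx A 0 0 B).
Proof.
by rewrite /row_free rank_diag_block_mx => /eqP -> /eqP ->.
Qed.

Lemma row_free_col_mxd (F : fieldType) m1 m2 n
    (A : 'M[F]_(m1, n)) (B : 'M[F]_(m2, n)) :
  row_free (col_mx A B) -> row_free B.
Proof.
move=> freeAB; apply: inj_row_free => v vB0.
have := row_free_inj freeAB (x1 := row_mx 0 v) (x2 := 0).
rewrite mul_row_col mul0mx add0r vB0 mul0mx => /(_ erefl) /eqP.
by rewrite row_mx_eq0 => /andP [_ /eqP].
Qed.

Lemma row_free_H3 (F : fieldType) n (s : state F n) a :
  row_free (sH s) -> row_free (H3 s a).
Proof. by move=> freeH; apply: row_free_diag_block_mx; rewrite // row_free_unit unitmx1. Qed.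

Lemma alg2a_step_row_free (F : fieldType) n a rcv (s s' : state F n) :
  alg2a_step a rcv s s' -> row_free (sH s) -> row_free (sH s').
Proof.
move=> [g [_ [_ [d [k [BD [B2 [kj [Bj2 [X [_ [_ [freeB' [_ [_ [_ ->]]]]]]]]]]]]]]]].
move=> freeH; rewrite /row_free mxrankMfree; last exact: row_free_H3.
exact: row_free_col_mxd freeB'.
Qed.

Theorem lemma3 (F : finFieldType) (n : nat) (hq : (n < #|F|)%N)
  (arr : nat -> nat) (rcv : nat -> 'I_n -> bool) (st : nat -> state F n) :
  st 0%N = init_state F n ->
  (forall t : nat, alg2a_step (arr t) (rcv t) (st t) (st t.+1)) ->
  forall t : nat, row_free (H3 (st t) (arr t)).
Proof.
move=> st0 step t; apply: row_free_H3.
elim: t => [|t IHt]; first by rewrite st0 /row_free mxrank0.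
exact: alg2a_step_row_free (step t) IHt.
Qed.
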